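(* Let $1\gg \delta \gg n^{-1}$. Every $n$-vertex tree $T$ satisfies at least one of the following: (A) $T$ contains at least $\delta n/800$ vertex-disjoint bare paths, each of length at least $\delta^{-1}$; (B) $T$ contains at least $\delta^6 n$ non-neighbouring leaves; (C) removing from $T$ every leaf whose neighbour is adjacent to at least $\delta^{-4}$ leaves gives a tree with at most $n/100$ vertices.
   Context: A bare path in a tree is a path whose internal vertices all have degree 2 in the tree. A set of leaves is non-neighbouring if no two of them share a neighbour (equivalently, the leaves together with their neighbours span a matching). $a\gg b$ means the statement holds whenever $b\le a^C/C$ for a suitable fixed absolute constant $C$; in particular $n$ is sufficiently large in terms of $\delta$ and $\delta$ is sufficiently small. *)

From HB Require Import structures.
From mathcomp Require Import all_boot all_order all_algebra.
From mathcomp Require Import reals.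
Set Implicit Arguments. Unset Strict Implicit. Unset Printing Implicit Defensive.
Import Order.TTheory GRing.Theory Num.Theory.

Section Graphs.
Variable T : finType.
Variable e : rel T.

Definition is_tree : Prop :=
  [/\ symmetric e, irreflexive e,
      (forall x y : T, connect e x y) &
      (forall c : seq T, (3 <= size c)%N -> uniq c -> ~~ cycle e c)].

Definition deg (v : T) : nat := #|[set y | e v y]|.

Definition is_leaf (v : T) : bool := deg v == 1%N.

Definition is_gpath (p : seq T) : bool :=
  if p is x :: q then path e x q && uniq p else false.

Definition internal (p : seq T) : seq T :=
  if p is x :: q then behead (belast x q) else [::].

Definition bare_path (p : seq T) : bool :=
  is_gpath p && all (fun v => deg v == 2%N) (internal p).

Definition plen (p : seq T) : nat := (size p).-1.

Definition non_neighbouring (L : {set T}) : Prop :=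
  (forall l, l \in L -> is_leaf l) /\
  (forall l1 l2 y, l1 \in L -> l2 \in L -> l1 != l2 -> ~~ (e l1 y && e l2 y)).

Definition leaf_nbrs (y : T) : nat := #|[set z | e y z & is_leaf z]|.

End Graphs.

(* Root the tree at a non-leaf r.  Call a non-leaf vertex a link if it is not r, has
   degree 2 and its only child is not a leaf, and branching otherwise.  Each non-leaf
   other than r is the non-leaf child of exactly one vertex and each link has exactly
   one non-leaf child, so the branching vertices have one non-leaf child fewer than
   their number in total.  A branching vertex other than r that is not adjacent to a
   leaf has at least two, hence there are at most 2(s+1) branching vertices, where s is
   the number of vertices adjacent to a leaf.  The links therefore form few vertical
   chains, and cutting them at the depths congruent to K modulo K+1 gives at least
   (#inner - 12K(s+1))/2K disjoint bare paths of length K.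
   Picking one leaf next to each such vertex gives s non-neighbouring leaves, so if (B)
   fails then s < δ^6 n.  The leaves kept in (C) hang from vertices with fewer than
   δ^-4 leaf neighbours, so there are at most δ^-4 s of them; if (C) fails as well, the
   tree has at least n/100 - δ^2 n non-leaves, and K = ⌊δ^-1⌋ + 1 gives (A). *)

From mathcomp Require Import all_boot all_order all_algebra.
From mathcomp Require Import reals.
From mathcomp Require Import zify ring lra.
Set Implicit Arguments. Unset Strict Implicit. Unset Printing Implicit Defensive.
Import Order.TTheory GRing.Theory Num.Theory.

Lemma mem_internal (T : finType) (x y : T) s : y \in internal (x :: s) -> y \in s.
Proof. by case: s => [|a s] //= /mem_belast. Qed.

Section Leaves.
Variables (T : finType) (e : rel T).

Lemma leaf_adj_uniq l y1 y2 : is_leaf e l -> e l y1 -> e l y2 -> y1 = y2.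
Proof.
rewrite /is_leaf /deg => /cards1P [x Ex] ly1 ly2.
have : y1 \in [set y | e l y] by rewrite inE.
have : y2 \in [set y | e l y] by rewrite inE.
by rewrite Ex !inE => /eqP -> /eqP ->.
Qed.

Lemma leaf_adj_ex l : is_leaf e l -> exists y, e l y.
Proof.
rewrite /is_leaf /deg => /cards1P [x Ex]; exists x.
have : x \in [set y | e l y] by rewrite Ex inE.
by rewrite inE.
Qed.

Definition inner := [set v | ~~ is_leaf e v].

Definition supports := [set y | [exists z, e y z && is_leaf e z]].

End Leaves.

Section RootedTree.
Variables (T : finType) (e : rel T).
Hypothesis e_sym : symmetric e.
Hypothesis e_irr : irreflexive e.
Hypothesis e_conn : forall x y : T, connect e x y.
Hypothesis e_acyclic : forall c : seq T, (3 <= size c)%N -> uniq c -> ~~ cycle e c.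
Variable r : T.

Definition ball k :=
  iter k (fun B : {set T} => B :|: [set y | [exists x in B, e x y]]) [set r].

Lemma mem_ball0 y : (y \in ball 0) = (y == r).
Proof. by rewrite /= inE. Qed.

Lemma ball_step x y k : x \in ball k -> e x y -> y \in ball k.+1.
Proof.
move=> xk exy; rewrite /= inE; apply/orP; right; rewrite inE.
by apply/existsP; exists x; rewrite xk.
Qed.

Lemma mem_ballS y k :
  y \in ball k.+1 -> y \in ball k \/ exists2 x, x \in ball k & e x y.
Proof.
rewrite /= !inE => /orP [->|]; first by left.
by move/existsP => [x /andP [xk exy]]; right; exists x.
Qed.

Lemma last_path_ball x p k :
  x \in ball k -> path e x p -> last x p \in ball (k + size p).
Proof.
elim: p x k => [|y p IH] x k /=; first by rewrite addn0.
move=> xk /andP [exy pp]; rewrite addnS -addSn; apply: IH pp.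
exact: ball_step xk exy.
Qed.

Lemma exists_ball y : exists k, y \in ball k.
Proof.
have /connectP [p pp ->] := e_conn r y.
by exists (0 + size p); apply: last_path_ball pp; rewrite mem_ball0.
Qed.

Definition depth y := ex_minn (exists_ball y).

Lemma ball_depth y : y \in ball (depth y).
Proof. by rewrite /depth; case: ex_minnP. Qed.

Lemma depth_le y k : y \in ball k -> depth y <= k.
Proof. by rewrite /depth; case: ex_minnP => m _ min_m /min_m. Qed.

Lemma depth_eq0 y : (depth y == 0) = (y == r).
Proof.
apply/idP/idP => [/eqP d0|/eqP->]; first by have := ball_depth y; rewrite d0 mem_ball0.
by rewrite -leqn0; apply: depth_le; rewrite mem_ball0.
Qed.

Lemma depth_adj u v : e u v -> depth v <= (depth u).+1.
Proof. by move=> euv; apply: depth_le; apply: ball_step (ball_depth u) euv. Qed.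

(* [parent r = r] *)
Definition parent y := odflt y [pick x | (x \in ball (depth y).-1) && e x y].

Lemma parent_spec y : y != r -> e y (parent y) /\ (depth (parent y)).+1 = depth y.
Proof.
move=> yr; have : depth y != 0 by rewrite depth_eq0.
case Ed : (depth y) => [//|d] _.
have yd := ball_depth y; rewrite Ed in yd.
have y_notin : y \notin ball d by apply/negP => /depth_le; rewrite Ed ltnn.
have [x xd exy] : exists2 x, x \in ball d & e x y.
  by case: (mem_ballS yd) => // yd'; rewrite yd' in y_notin.
rewrite /parent Ed /=; case: pickP => [x' /andP [x'd ex'y]|/(_ x)]; last by rewrite xd exy.
split; first by rewrite e_sym.
apply/eqP; rewrite eqn_leq ltnS (depth_le x'd) -Ed.
exact: depth_adj.
Qed.

Lemma parent_adj y : y != r -> e y (parent y).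
Proof. by case/parent_spec. Qed.

Lemma depth_parent y : y != r -> (depth (parent y)).+1 = depth y.
Proof. by case/parent_spec. Qed.

Lemma same_depth_path d a b : depth a = d -> depth b = d -> a != b ->
  exists q, [/\ path e a q, last a q = b, uniq (a :: q), 1 < size q &
                all (fun x => depth x <= d) q].
Proof.
have notin_deeper (s : seq T) c k :
    all (fun x => depth x <= k) s -> depth c = k.+1 -> c \notin s.
  by move=> /allP s_le dc; apply/negP => /s_le; rewrite dc ltnn.
elim: d a b => [|d IH] a b da db ab.
  by move: ab; move/eqP: da; move/eqP: db; rewrite !depth_eq0 => /eqP -> /eqP ->; rewrite eqxx.
have ar : a != r by rewrite -depth_eq0 da.
have br : b != r by rewrite -depth_eq0 db.
have dpa : depth (parent a) = d by apply/eqP; rewrite -eqSS depth_parent // da.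
have dpb : depth (parent b) = d by apply/eqP; rewrite -eqSS depth_parent // db.
case: (eqVneq (parent a) (parent b)) => [pab|pa_pb].
  exists [:: parent a; b]; split => //=.
  - by rewrite parent_adj // pab e_sym parent_adj.
  - have neq_depth x y : depth x != depth y -> x != y by apply: contraNneq => ->.
    rewrite !inE negb_or ab /=.
    by rewrite andbT (neq_depth a) ?(neq_depth _ b) // ?da ?db dpa; lia.
  - by rewrite dpa db leqnn leqnSn.
have [q [pq lq uq sq aq]] := IH _ _ dpa dpb pa_pb.
have low : all (fun x => depth x <= d) (parent a :: q) by rewrite /= dpa leqnn aq.
exists (rcons (parent a :: q) b); split.
- by rewrite rcons_path /= parent_adj // pq /= lq e_sym parent_adj.
- by rewrite last_rcons.
- rewrite cons_uniq mem_rcons in_cons negb_or ab (notin_deeper _ _ _ low da).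
  by rewrite rcons_uniq uq andbT (notin_deeper _ _ _ low db).
- by rewrite size_rcons.
- rewrite all_rcons db leqnn /= dpa leqnSn /=.
  by apply: sub_all aq => x /= /leq_trans; apply; apply: leqnSn.
Qed.

(* An edge that is not a parent edge would close a cycle with [same_depth_path]. *)
Lemma adj_parent u v : e u v -> (u != r /\ parent u = v) \/ (v != r /\ parent v = u).
Proof.
wlog: u v / depth u <= depth v => [sym|duv] euv.
  case: (leqP (depth u) (depth v)) => duv; first exact: sym.
  by rewrite e_sym in euv; case: (sym v u (ltnW duv) euv); [right|left].
have uv : u != v by apply: contraTneq euv => ->; rewrite e_irr.
move: (depth_adj euv); rewrite leq_eqVlt ltnS => /orP [/eqP dv|dvu]; last first.
  have [q [pq lq uq sq _]] := same_depth_path (anti_leq (introT andP (conj duv dvu))) erefl uv.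
  have := e_acyclic (c := u :: q); rewrite /= ltnS sq => /(_ isT uq).
  by rewrite rcons_path pq lq e_sym euv.
have vr : v != r by rewrite -depth_eq0 dv.
case: (eqVneq (parent v) u) => [pvu|pv_u]; first by right.
have dpv : depth (parent v) = depth u by apply/eqP; rewrite -eqSS depth_parent // dv.
have [q [pq lq uq sq aq]] := same_depth_path dpv erefl pv_u.
have v_notin : v \notin parent v :: q.
  have low : all (fun x => depth x <= depth u) (parent v :: q) by rewrite /= dpv leqnn aq.
  by apply/negP => /(allP low) /=; rewrite dv ltnn.
have : ~~ cycle e (v :: parent v :: q).
  by apply: e_acyclic; [rewrite /= !ltnS ltnW | rewrite cons_uniq v_notin uq].
by rewrite /= parent_adj // rcons_path pq lq euv.
Qed.

Definition children p := [set w | (w != r) && (parent w == p)].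

Lemma parent_notin_children p : p != r -> parent p \notin children p.
Proof.
move=> pr; rewrite inE; apply/negP => /andP [ppr /eqP pp].
by have := depth_parent pr; have := depth_parent ppr; rewrite pp; lia.
Qed.

Lemma deg_children p : deg e p = #|children p| + (p != r).
Proof.
rewrite /deg; case: (eqVneq p r) => [->|pr].
  rewrite addn0; apply: eq_card => y; rewrite !inE.
  apply/idP/idP => [/adj_parent [[]|[-> ->]]|/andP [yr /eqP <-]]; rewrite ?eqxx //.
  by rewrite e_sym parent_adj.
have -> : [set y | e p y] = parent p |: children p.
  apply/setP => y; rewrite !inE.
  apply/idP/idP => [/adj_parent [[_ ->]|[-> ->]]|]; rewrite ?eqxx ?orbT //.
  case/orP => [/eqP ->|/andP [yr /eqP <-]]; first exact: parent_adj.
  by rewrite e_sym parent_adj.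
by rewrite cardsU1 parent_notin_children // addn1.
Qed.

Lemma depth_iter_parent m v : (forall i, i < m -> iter i parent v != r) ->
  depth (iter m parent v) + m = depth v.
Proof.
elim: m => [|m IH] vr; first by rewrite addn0.
rewrite iterS addnS -addSn depth_parent; last exact: vr.
by apply: IH => i im; apply: vr; rewrite ltnS ltnW.
Qed.

Lemma path_traject_parent m v : (forall i, i < m -> iter i parent v != r) ->
  path e v (traject parent (parent v) m).
Proof.
elim: m v => [|m IH] v vr //=.
rewrite parent_adj; last exact: (vr 0).
by apply: IH => i im; rewrite -iterSr; apply: vr.
Qed.

Lemma uniq_traject_parent m v : (forall i, i < m -> iter i parent v != r) ->
  uniq (traject parent v m.+1).
Proof.
move=> vr; rewrite looping_uniq; apply/negP => /trajectP [i im E].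
have := depth_iter_parent vr.
have := @depth_iter_parent i v (fun j ji => vr j (ltn_trans ji im)).
by rewrite E => <- /eqP; rewrite eqn_add2l => /eqP mi; rewrite mi ltnn in im.
Qed.

Section Links.
Hypothesis r_inner : r \in inner e.

Definition inner_children p := #|[set w in inner e | (w != r) && (parent w == p)]|.

(* The internal vertices of a bare path running down the tree are links. *)
Definition link p := [&& p \in inner e, p != r, deg e p == 2 & inner_children p == 1].

Definition branching := [set p in inner e | ~~ link p].

Definition link_tops := [set c | link c && ~~ link (parent c)].

Lemma parent_inner w : w != r -> parent w \in inner e.
Proof.
move=> wr; case: (eqVneq (parent w) r) => [->|pwr] //.
rewrite inE /is_leaf deg_children pwr addn1 eqSS -lt0n.
by apply/card_gt0P; exists w; rewrite inE wr eqxx.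
Qed.

Lemma sum_inner_children (B : {set T}) :
  #|[set w in inner e | (w != r) && (parent w \in B)]| = \sum_(p in B) inner_children p.
Proof.
rewrite -sum1_card (partition_big parent (mem B)) /=; last first.
  by move=> w; rewrite !inE => /andP [_ /andP [_ ->]].
apply: eq_bigr => p pB; rewrite /inner_children -sum1_card; apply: eq_bigl => w.
by rewrite !inE; case: (eqVneq (parent w) p) => [->|]; rewrite ?pB ?andbT ?andbF.
Qed.

Lemma sum_inner_children_inner : (\sum_(p in inner e) inner_children p).+1 = #|inner e|.
Proof.
rewrite -sum_inner_children (cardsD1 r (inner e)) r_inner add1n; congr _.+1.
apply: eq_card => w; rewrite !inE.
case: (eqVneq w r) => [->|wr]; rewrite ?andbF //=.
by have := parent_inner wr; rewrite inE => ->; rewrite andbT.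
Qed.

Lemma link_inner p : link p -> p \in inner e. Proof. by case/and4P. Qed.
Lemma link_neq_root p : link p -> p != r. Proof. by case/and4P. Qed.

Lemma card_children_link p : link p -> #|children p| = 1.
Proof. by case/and4P => _ pr /eqP; rewrite deg_children pr addn1 => -[]. Qed.

Lemma link_child_uniq p w1 w2 : link p ->
  w1 != r -> w2 != r -> parent w1 = p -> parent w2 = p -> w1 = w2.
Proof.
move=> /card_children_link /eqP /cards1P [x Ex] w1r w2r pw1 pw2.
have : w1 \in children p by rewrite inE w1r pw1 eqxx.
have : w2 \in children p by rewrite inE w2r pw2 eqxx.
by rewrite Ex !inE => /eqP -> /eqP ->.
Qed.

Lemma link_inner_child p : link p ->
  exists2 x, x \in inner e & (x != r) && (parent x == p).
Proof.
case/and4P => _ _ _ /eqP one; have : 0 < inner_children p by rewrite one.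
by rewrite /inner_children => /card_gt0P [x]; rewrite in_set => /andP [xi xp]; exists x.
Qed.

Lemma link_child_inner p w : link p -> w != r -> parent w = p -> w \in inner e.
Proof.
move=> lp wr pw; have [x xi /andP [xr /eqP px]] := link_inner_child lp.
by rewrite (link_child_uniq lp wr xr pw px).
Qed.

Definition child p := odflt p [pick w | (w != r) && (parent w == p)].

Lemma child_spec p : link p -> child p != r /\ parent (child p) = p.
Proof.
move=> lp; rewrite /child; case: pickP => [w /andP [wr /eqP pw] //|no_child].
by have [x _] := link_inner_child lp; rewrite no_child.
Qed.

Lemma child_parent y : link (parent y) -> y != r -> child (parent y) = y.
Proof.
move=> ly yr; have [cr pc] := child_spec ly.
exact: link_child_uniq ly cr yr pc erefl.
Qed.

Lemma iter_child_parent j x :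
  (forall i, i < j -> iter i parent x != r /\ link (iter i.+1 parent x)) ->
  iter j child (iter j parent x) = x.
Proof.
elim: j => [//|j IH] chain.
have [jr jl] := chain j (ltnSn j).
rewrite iterSr iterS child_parent //.
by apply: IH => i ij; apply: chain; rewrite ltnS ltnW.
Qed.

Lemma sum_inner_children_branching :
  (\sum_(p in branching) inner_children p).+1 = #|branching|.
Proof.
have split_inner (F : T -> nat) : \sum_(p in inner e) F p =
    \sum_(p in inner e | link p) F p + \sum_(p in branching) F p.
  by rewrite (bigID link) /=; congr (_ + _); apply: eq_bigl => p; rewrite !inE.
have := sum_inner_children_inner; rewrite -sum1_card !split_inner.
rewrite (eq_bigr (fun=> 1)) => [|p /andP [_ /and4P [_ _ _ /eqP //]]].
by rewrite -addnS => /addnI ->; rewrite sum1_card.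
Qed.

Lemma inner_children_nonsupport p :
  p \notin supports e -> inner_children p = #|children p|.
Proof.
move=> pS; apply: eq_card => w; rewrite !inE andbC.
case: (boolP ((w != r) && (parent w == p))) => //= /andP [wr /eqP pw].
apply: contraNN pS => wl; rewrite inE; apply/existsP; exists w.
by rewrite wl andbT e_sym -pw parent_adj.
Qed.

Lemma branching_inner_children p :
  p \in branching -> p \notin supports e -> p != r -> 1 < inner_children p.
Proof.
rewrite inE => /andP [pi pl] pS pr; rewrite inner_children_nonsupport //.
have : 0 < #|children p| by move: pi; rewrite inE /is_leaf deg_children pr addn1 eqSS lt0n.
rewrite leq_eqVlt => /orP [/eqP one|//]; move: pl.
by rewrite /link pi pr deg_children pr inner_children_nonsupport // -one.
Qed.

Lemma card_branching : #|branching| <= 2 * #|supports e :|: [set r]|.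
Proof.
set S := supports e :|: [set r].
have split_S (F : T -> nat) : \sum_(p in branching) F p =
    \sum_(p in branching | p \in S) F p + \sum_(p in branching | p \notin S) F p.
  by rewrite -bigID.
have inside : \sum_(p in branching | p \in S) 1 <= #|S|.
  rewrite sum1_card; apply: subset_leq_card; apply/subsetP => p.
  by rewrite unfold_in => /andP [].
have outside : \sum_(p in branching | p \notin S) (1 + 1) <=
               \sum_(p in branching | p \notin S) inner_children p.
  apply: leq_sum => p /andP [pB]; rewrite in_setU in_set1 negb_or => /andP [pS pr].
  exact: branching_inner_children.
rewrite big_split /= in outside.
have := sum_inner_children_branching; rewrite -sum1_card !split_S; lia.
Qed.

Lemma card_link_tops : #|link_tops| <= #|branching|.
Proof.
rewrite -[X in _ <= X]sum_inner_children_branching -sum_inner_children ltnW // ltnS.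
apply: subset_leq_card; apply/subsetP => c; rewrite !inE => /andP [lc lpc].
have cr := link_neq_root lc; have := parent_inner cr.
by have := link_inner lc; rewrite !inE => -> ->; rewrite cr lpc.
Qed.

Section Windows.
Variable K : nat.
Hypothesis K_gt0 : 0 < K.

Definition phase x := depth x %% K.+1.

(* Phases decrease from [K] to [0] along the window [traject parent v K.+1] of a
   bottom [v], so the windows of distinct bottoms are disjoint. *)
Definition window_bottoms :=
  [set v | (phase v == K) && [forall i : 'I_K, link (iter i.+1 parent v)]].

Definition windows := [seq traject parent v K.+1 | v <- enum window_bottoms].

Lemma phase_le x : phase x <= K.
Proof. by rewrite -ltnS ltn_pmod. Qed.

Lemma phase_eq x q u : depth x = q * K.+1 + u -> u <= K -> phase x = u.
Proof. by rewrite /phase => -> uK; rewrite modnMDl modn_small. Qed.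

Lemma window_bottom_links v i : v \in window_bottoms -> i < K ->
  iter i parent v != r /\ link (iter i.+1 parent v).
Proof.
rewrite inE => /andP [/eqP pv /forallP links] iK; split; last exact: (links (Ordinal iK)).
case: i iK => [|i] iK; last exact: link_neq_root (links (Ordinal (ltnW iK))).
by rewrite /= -depth_eq0; apply/negP => /eqP d0; move: pv; rewrite /phase d0 mod0n; lia.
Qed.

Lemma windows_bare : all (bare_path e) windows.
Proof.
apply/allP => p /mapP [v]; rewrite mem_enum => vw ->.
have chain := window_bottom_links vw; apply/andP; split.
  apply/andP; split; first by apply: path_traject_parent => i /chain [].
  by apply: (uniq_traject_parent (m := K)) => i /chain [].
apply/allP => y /mem_internal /trajectP [i ik ->].
by rewrite -iterSr; have [_ /and4P [_ _ /eqP -> _]] := chain i ik.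
Qed.

Lemma plen_windows p : p \in windows -> plen p = K.
Proof. by case/mapP => v _ ->; rewrite /plen size_traject. Qed.

Lemma size_windows : size windows = #|window_bottoms|.
Proof. by rewrite size_map cardE. Qed.

Lemma disjoint_windows v w : v \in window_bottoms -> w \in window_bottoms -> v != w ->
  [disjoint traject parent v K.+1 & traject parent w K.+1].
Proof.
move=> vb wb; apply: contraNT; rewrite disjoint_has negbK => /hasP [y /trajectP [j jK ->]].
case/trajectP => i iK E; apply/eqP.
have chain_v := window_bottom_links vb; have chain_w := window_bottom_links wb.
have phase_iter u k : u \in window_bottoms -> k < K.+1 ->
    phase (iter k parent u) = K - k.
  move=> ub kK; have := ub; rewrite inE => /andP [/eqP pu _].
  have := @depth_iter_parent k u (fun l lk => (window_bottom_links ub (leq_trans lk kK)).1).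
  have := divn_eq (depth u) K.+1; rewrite -/(phase u) pu => du dk.
  by apply: (phase_eq (q := depth u %/ K.+1)); lia.
have ij : i = j by have := phase_iter _ _ wb iK; rewrite -E phase_iter //; lia.
subst j; rewrite -(@iter_child_parent i v) ?E ?iter_child_parent // => k ki.
  by apply: chain_w; lia.
by apply: chain_v; lia.
Qed.

Lemma windows_pairwise_disjoint : pairwise (fun p q : seq T => [disjoint p & q]) windows.
Proof.
rewrite pairwise_map.
apply: (sub_in_pairwise (P := mem window_bottoms) (r := SimplRel (fun x y : T => x != y))).
- by move=> v w vb wb /= vw; apply: disjoint_windows.
- by apply/allP => v; rewrite mem_enum.
- by rewrite -uniq_pairwise enum_uniq.
Qed.

Lemma descend_links m y : link y ->
  (exists v, [/\ iter m parent v = y, forall i, i < m -> iter i parent v != r &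
                 forall i, 0 < i <= m -> link (iter i parent v)]) \/
  (exists b z, [/\ 0 < b <= m, iter b parent z = y, ~~ link z &
                 forall i, 0 < i <= b -> link (iter i parent z)]).
Proof.
move=> ly; elim: m => [|m [[v [vy vr vl]]|[b [z [bm zy zl links]]]]].
- by left; exists y; split => // -[].
- case: (boolP (link v)) => lv; last first.
    right; exists m, v; split => //; rewrite leqnSn andbT lt0n.
    by apply: contraNneq lv => m0; move: vy; rewrite m0 /= => ->.
  left; have [cr pc] := child_spec lv; exists (child v); split.
  + by rewrite iterSr pc.
  + by case=> [|i] im //; rewrite iterSr pc; apply: vr.
  + by case=> [|[|i]] // /andP [_ im]; rewrite iterSr pc //; apply: vl.
- by right; exists b, z; split => //; case/andP: bm => -> /= /leqW.
Qed.

Definition ancestor (vi : T * 'I_K) := iter vi.2.+1 parent vi.1.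
Definition descendant (vi : T * 'I_K) := iter vi.2 child vi.1.

Lemma link_cover_up x : link x -> phase x < K ->
  (forall k, k <= phase x -> link (iter k parent x)) ->
  x \in ancestor @: setX (window_bottoms :|: branching) setT.
Proof.
move=> lx xK up; set m := K - phase x.
have m_gt0 : 0 < m by rewrite subn_gt0.
have [[v [vx vr vl]]|[b [z [bm zx zl links]]]] := descend_links m lx.
  have vb : v \in window_bottoms.
    rewrite inE; apply/andP; split.
      have := divn_eq (depth x) K.+1; have := depth_iter_parent vr; rewrite vx -/(phase x).
      by move=> dv dx; apply/eqP/(phase_eq (q := depth x %/ K.+1)); lia.
    apply/forallP => i; case: (leqP i.+1 m) => im; first by apply: vl; rewrite im.
    rewrite -(subnK (ltnW im)) iterD vx; apply: up.
    by have := ltn_ord i; rewrite /m; lia.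
  have mK : m.-1 < K by rewrite /m; lia.
  apply/imsetP; exists (v, Ordinal mK); first by rewrite in_setX in_setU vb in_setT.
  by rewrite /ancestor /= -iterS prednK.
have zb : z \in branching.
  rewrite inE zl andbT; case: (eqVneq z r) => [->|zr] //.
  by apply: (link_child_inner (links 1 _)) => //; case/andP: bm.
have bK : b.-1 < K by move: bm; rewrite /m; lia.
apply/imsetP; exists (z, Ordinal bK); first by rewrite in_setX in_setU zb orbT in_setT.
by rewrite /ancestor /= -iterS prednK //; case/andP: bm.
Qed.

Lemma link_cover_down x j : link x -> j <= K -> ~~ link (iter j parent x) ->
  x \in descendant @: setX link_tops setT.
Proof.
move=> lx jK nlj; have ex : exists j, ~~ link (iter j parent x) by exists j.
case: (ex_minnP ex) => k nlk kmin; have kj := kmin j nlj.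
have below i : i < k -> link (iter i parent x).
  by move=> ik; apply/negPn/negP => /kmin; rewrite leqNgt ik.
have k_gt0 : 0 < k by rewrite lt0n; apply: contraNneq nlk => ->.
have kK : k.-1 < K by lia.
have top : iter k.-1 parent x \in link_tops.
  by rewrite inE below -?iterS prednK ?nlk //; lia.
apply/imsetP; exists (iter k.-1 parent x, Ordinal kK); first by rewrite in_setX top in_setT.
rewrite /descendant /= iter_child_parent // => i ik.
by split; [apply: link_neq_root|]; apply: below; lia.
Qed.

Definition low_links := [set y | link y && (phase y < K)].

Lemma low_link_cover x : x \in low_links ->
  x \in ancestor @: setX (window_bottoms :|: branching) setT :|:
        descendant @: setX link_tops setT.
Proof.
rewrite inE => /andP [lx xK]; rewrite inE.
case: (boolP [forall k : 'I_(phase x).+1, link (iter k parent x)]).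
  move=> /forallP up; rewrite link_cover_up // => k kx.
  exact: (up (Ordinal (n := (phase x).+1) (m := k) kx)).
case/forallPn => k nlk; rewrite (link_cover_down lx _ nlk) ?orbT //.
by rewrite (leq_trans _ (ltnW xK)) // -ltnS.
Qed.

Lemma high_link_cover x : link x -> phase x = K -> x \in child @: low_links :|: link_tops.
Proof.
move=> lx px; rewrite inE.
case: (boolP (link (parent x))) => lpx; last by rewrite inE lx lpx orbT.
apply/orP; left; apply/imsetP; exists (parent x); last first.
  by rewrite child_parent // link_neq_root.
rewrite inE lpx /= ltn_neqAle phase_le andbT; apply/negP => /eqP ppx.
have dx := depth_parent (link_neq_root lx).
have := divn_eq (depth (parent x)) K.+1; rewrite -/(phase (parent x)) ppx => dpx.
have : phase x = 0 by apply: (phase_eq (q := (depth (parent x) %/ K.+1).+1)); lia.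
lia.
Qed.

Lemma card_low_links :
  #|low_links| <= (#|window_bottoms| + #|branching|) * K + #|branching| * K.
Proof.
have cardU (A B : {set T}) := (leq_card_setU A B).1.
have card_im (A : {set T}) (g : T * 'I_K -> T) : #|g @: setX A setT| <= #|A| * K.
  by rewrite (leq_trans (leq_imset_card _ _)) // cardsX cardsT card_ord.
apply: leq_trans (_ : #|ancestor @: setX (window_bottoms :|: branching) setT| +
                      #|descendant @: setX link_tops setT| <= _).
  apply: leq_trans (cardU _ _); apply: subset_leq_card; apply/subsetP => x.
  exact: low_link_cover.
by apply: leq_add; apply: leq_trans (card_im _ _) _;
  rewrite leq_mul2r ?cardU ?card_link_tops orbT.
Qed.

Lemma card_inner_windows :
  #|inner e| <= 2 * K * #|window_bottoms| + 6 * K * #|branching|.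
Proof.
have cardU (A B : {set T}) := (leq_card_setU A B).1.
set high := [set y | link y && (phase y == K)].
have inner_le : #|inner e| <= #|low_links :|: high| + #|branching|.
  apply: leq_trans (cardU _ _); apply: subset_leq_card; apply/subsetP => x.
  rewrite !inE => xi; rewrite xi; case: (link x) => //=.
  by rewrite orbF orbC -leq_eqVlt phase_le.
have high_le : #|high| <= #|low_links| + #|branching|.
  apply: leq_trans (_ : #|child @: low_links :|: link_tops| <= _).
    apply: subset_leq_card; apply/subsetP => x; rewrite inE => /andP [lx /eqP px].
    exact: high_link_cover.
  by apply: leq_trans (cardU _ _) _; rewrite leq_add ?leq_imset_card ?card_link_tops.
by have := cardU low_links high; have := card_low_links; have := K_gt0; nia.
Qed.

End Windows.
End Links.
End RootedTree.
Lemma exists_inner (T : finType) (e : rel T) :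
  symmetric e -> (forall x y, connect e x y) -> 2 < #|T| -> exists r, r \in inner e.
Proof.
move=> e_sym e_conn T_gt2.
case: (boolP [exists r, r \in inner e]) => [/existsP //|/existsPn all_leaves].
suff : #|T| <= 2 by rewrite leqNgt T_gt2.
have leaf v : is_leaf e v by have := all_leaves v; rewrite inE negbK.
have /card_gt0P [x _] : 0 < #|T| by apply: ltn_trans T_gt2.
have [y exy] := leaf_adj_ex (leaf x).
have stay u w : u \in [set x; y] -> e u w -> w \in [set x; y].
  rewrite !inE => /orP [] /eqP -> euw.
    by rewrite (leaf_adj_uniq (leaf x) euw exy) eqxx orbT.
  by rewrite (leaf_adj_uniq (leaf y) euw (etrans (e_sym y x) exy)) eqxx.
have closed_xy : closed e [set x; y].
  move=> u w euw; apply/idP/idP => [/stay/(_ euw) //|/stay]; apply.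
  by rewrite e_sym.
have all_xy : [set: T] \subset [set x; y].
  apply/subsetP => z _; rewrite -(closed_connect closed_xy (e_conn x z)).
  by rewrite !inE eqxx.
by rewrite -cardsT (leq_trans (subset_leq_card all_xy)) // cards2 ltnS leq_b1.
Qed.

Lemma tree_bare_paths (T : finType) (e : rel T) K : is_tree e -> 2 < #|T| -> 0 < K ->
  exists P : seq (seq T), [/\ all (bare_path e) P,
     pairwise (fun p q : seq T => [disjoint p & q]) P,
     (forall p, p \in P -> plen p = K) &
     #|inner e| <= 2 * K * size P + 12 * K * (#|supports e| + 1)].
Proof.
case=> e_sym e_irr e_conn e_acyclic T_gt2 K_gt0.
have [r r_inner] := exists_inner e_sym e_conn T_gt2.
exists (windows e_conn r K); split.
- exact: windows_bare.
- exact: windows_pairwise_disjoint.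
- exact: plen_windows.
- have := card_inner_windows e_sym e_irr e_conn e_acyclic r_inner K_gt0.
  have := card_branching e_sym e_irr e_conn e_acyclic r_inner.
  have := (leq_card_setU (supports e) [set r]).1; rewrite cards1 size_windows; nia.
Qed.

Section SupportLeaves.
Variables (T : finType) (e : rel T).
Hypothesis e_sym : symmetric e.

Definition leaf_at y := odflt y [pick z | e y z && is_leaf e z].

Lemma leaf_atP y : y \in supports e -> e y (leaf_at y) && is_leaf e (leaf_at y).
Proof.
rewrite inE => /existsP [z yz]; rewrite /leaf_at.
by case: pickP => [//|/(_ z)]; rewrite yz.
Qed.

Lemma leaf_at_uniq y z : y \in supports e -> e z (leaf_at y) -> z = y.
Proof.
move=> /leaf_atP /andP [yl l]; rewrite e_sym => zl.
by apply: (leaf_adj_uniq l); rewrite // e_sym.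
Qed.

Definition support_leaves := [set leaf_at y | y in supports e].

Lemma card_support_leaves : #|support_leaves| = #|supports e|.
Proof.
apply: card_in_imset => y1 y2 y1S y2S E.
by apply: (leaf_at_uniq y2S); rewrite -E; case/andP: (leaf_atP y1S).
Qed.

Lemma support_leaves_non_neighbouring : non_neighbouring e support_leaves.
Proof.
split; first by move=> l /imsetP [y yS ->]; case/andP: (leaf_atP yS).
move=> l1 l2 y /imsetP [y1 y1S ->] /imsetP [y2 y2S ->]; apply: contraNN => /andP [a b].
rewrite e_sym in a; rewrite e_sym in b.
by rewrite -(leaf_at_uniq y1S a) -(leaf_at_uniq y2S b).
Qed.

Definition leaf_neighbour v := odflt v [pick y | e v y].

Lemma leaf_neighbourP v : is_leaf e v -> e v (leaf_neighbour v).
Proof.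
move=> lv; have [y vy] := leaf_adj_ex lv; rewrite /leaf_neighbour.
by case: pickP => [//|/(_ y)]; rewrite vy.
Qed.

Local Open Scope ring_scope.

Lemma card_light_leaves (R : realDomainType) (t : R) : 0 <= t ->
  #|[set v | is_leaf e v && ~~ [exists y, e v y && (t <= (leaf_nbrs e y)%:R)]]|%:R
    <= #|supports e|%:R * t.
Proof.
move=> t_ge0; set light := [set v | _].
have -> : #|light| = (\sum_(y in supports e) #|[set v in light | leaf_neighbour v == y]|)%N.
  rewrite -sum1_card (partition_big leaf_neighbour (mem (supports e))) /=; last first.
    move=> v; rewrite inE => /andP [lv _]; rewrite inE; apply/existsP; exists v.
    by rewrite lv andbT e_sym leaf_neighbourP.
  by apply: eq_bigr => y _; rewrite -sum1_card; apply: eq_bigl => v; rewrite !inE.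
rewrite natr_sum -sum1_card natr_sum mulr_suml; apply: ler_sum => y _; rewrite mul1r.
case: (set_0Vmem [set v in light | leaf_neighbour v == y]) => [->|[v]].
  by rewrite cards0.
rewrite !inE => /andP [/andP [lv heavy] /eqP vy].
have few : (leaf_nbrs e y)%:R < t.
  rewrite ltNge; apply: contra heavy => many; apply/existsP; exists y.
  by rewrite -vy leaf_neighbourP // vy many.
apply: le_trans (ltW few); rewrite ler_nat; apply: subset_leq_card; apply/subsetP => z.
by rewrite !inE => /andP [/andP [lz _] /eqP <-]; rewrite lz andbT e_sym leaf_neighbourP.
Qed.

End SupportLeaves.

Lemma card_not_leafI_le (T : finType) (e : rel T) (P : pred T) :
  #|[set v | ~~ (is_leaf e v && P v)]| <= #|inner e| + #|[set v | is_leaf e v && ~~ P v]|.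
Proof.
apply: leq_trans (leq_card_setU _ _).1; apply: subset_leq_card; apply/subsetP => v.
by rewrite !inE negb_and; case: (is_leaf e v).
Qed.

Local Open Scope ring_scope.

Lemma threshold_sq_bound (R : realFieldType) (d : R) (C n : nat) :
  0 < d -> d <= 1 -> (2 <= C)%N -> (0 < n)%N ->
  n%:R^-1 <= d ^+ C / C%:R -> C%:R <= n%:R * d ^+ 2.
Proof.
move=> d_gt0 d_le1 C_ge2 n_gt0 hn.
have C_gt0 : 0 < C%:R :> R by rewrite ltr0n; lia.
have n_gt0' : 0 < n%:R :> R by rewrite ltr0n.
have dC : d ^+ C <= d ^+ 2 by apply: ler_wiXn2l => //; lra.
have : n%:R^-1 <= d ^+ 2 / C%:R.
  by apply: le_trans hn _; apply: ler_wpM2r => //; rewrite invr_ge0 ltW.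
by rewrite ler_pdivlMr // mulrC ler_pdivrMr // mulrC.
Qed.

Lemma density_estimate (R : realFieldType) (d n K S W X L P : R) :
  0 < d -> d <= 100^-1 -> 100 <= n * d ^+ 2 -> d^-1 < K -> K <= d^-1 + 1 ->
  0 <= S -> S < d ^+ 6 * n -> n / 100 < X -> X <= W + L -> L <= S * d ^- 4 ->
  W <= 2 * K * P + 12 * K * (S + 1) -> 0 <= P -> d * n / 800 <= P.
Proof.
move=> d_gt0 d_small nd2 uK Ku S_ge0 hS hX hXWL hL hW P_ge0.
rewrite -exprVn in hL; set u := d^-1 in uK Ku hL.
have du : d * u = 1 by rewrite mulfV ?gt_eqF.
have u_ge100 : 100 <= u by nra.
have n_ge0 : 0 <= n by nra.
have L_le : L <= d ^+ 2 * n.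
  apply: le_trans hL _; rewrite -[d ^+ 2 * n]mulr1 -(expr1n _ 4) -du.
  have -> : d ^+ 2 * n * (d * u) ^+ 4 = d ^+ 6 * n * u ^+ 4 by ring.
  by apply: ler_wpM2r; [apply: exprn_ge0; lra | lra].
have KS_le : K * S <= 2 * d ^+ 2 * n.
  have d5 : d ^+ 5 <= d ^+ 2 by apply: ler_wiXn2l => //; lra.
  have uS : u * S <= d ^+ 5 * n.
    have -> : d ^+ 5 * n = u * (d ^+ 6 * n).
      by rewrite -[LHS]mulr1 -du; ring.
    by apply: ler_wpM2l; lra.
  by nra.
have u_le : 100 * u <= n * d.
  have -> : n * d = n * d ^+ 2 * u by rewrite -[LHS]mulr1 -du; ring.
  by nra.
have : n * d / 200 <= 4 * (d * u) * P by nra.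
by rewrite du; lra.
Qed.

Lemma bare_path_density (R : realFieldType) (d : R) (n K S W X L P : nat) :
  0 < d -> d <= 100^-1 -> 100 <= n%:R * d ^+ 2 ->
  d^-1 < K%:R -> K%:R <= d^-1 + 1 ->
  S%:R < d ^+ 6 * n%:R -> n%:R / 100 < X%:R :> R -> (X <= W + L)%N ->
  L%:R <= S%:R * d ^- 4 -> (W <= 2 * K * P + 12 * K * (S + 1))%N ->
  d * n%:R / 800 <= P%:R.
Proof.
move=> d_gt0 d_small nd2 uK Ku hS hX hXWL hL hW.
rewrite -(ler_nat R) natrD in hXWL; rewrite -(ler_nat R) natrD !natrM natrD in hW.
exact: (density_estimate d_gt0 d_small nd2 uK Ku (ler0n R S) hS hX hXWL hL hW (ler0n R P)).
Qed.

Theorem lemma3p5 :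
  exists C : nat, (0 < C)%N /\
  forall (R : realType) (delta : R) (n : nat),
    0 < delta -> delta <= (C%:R)^-1 -> (0 < n)%N ->
    (n%:R)^-1 <= delta ^+ C / C%:R ->
    forall (T : finType) (e : rel T), #|T| = n -> is_tree e ->
      (* (A) *)
      (exists P : seq (seq T),
          [/\ all (bare_path e) P,
              pairwise (fun p q : seq T => [disjoint p & q]) P,
              all (fun p => delta^-1 <= (plen p)%:R) P &
              delta * n%:R / 800 <= ((size P)%:R : R)])
      \/
      (* (B) *)
      (exists L : {set T}, non_neighbouring e L /\ delta ^+ 6 * n%:R <= #|L|%:R)
      \/
      (* (C) *)
      (#|[set v : T | ~~ (is_leaf e v &&
            [exists y, e v y && (delta ^- 4 <= (leaf_nbrs e y)%:R)])]|%:R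
         <= (n%:R : R) / 100).
Proof.
exists 100%N; split => // R d n d_gt0 d_small n_gt0 n_large T e cardT tree_e.
have e_sym : symmetric e by case: tree_e.
have d_le1 : d <= 1 by apply: le_trans d_small _; rewrite invf_le1 ?ler1n.
have nd2 := threshold_sq_bound d_gt0 d_le1 (isT : 2 <= 100)%N n_gt0 n_large.
have T_gt2 : (2 < #|T|)%N.
  have : 100 <= n%:R :> R by have := exprn_ile1 2 (ltW d_gt0) d_le1; nra.
  by rewrite cardT ler_nat; lia.
set K := (Num.truncn d^-1).+1.
have [P [bareP disjP lenP innerP]] := tree_bare_paths (K := K) tree_e T_gt2 isT.
case: (lerP (d ^+ 6 * n%:R) #|support_leaves e|%:R) => [manyB|fewB].
  right; left; exists (support_leaves e).
  by split => //; apply: support_leaves_non_neighbouring.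
case: (lerP _ (n%:R / 100)) => [smallC|bigC]; first by right; right.
left; exists P; split => //; first by apply/allP => p /lenP ->; apply/ltW/truncnS_gt.
pose heavy v := [exists y, e v y && (d ^- 4 <= (leaf_nbrs e y)%:R)].
apply: (bare_path_density d_gt0 d_small nd2 (truncnS_gt _) _ _ bigC
          (card_not_leafI_le e heavy) (card_light_leaves e_sym _) innerP).
- by rewrite -addn1 natrD lerD2r truncn_le invr_ge0 ltW.
- by rewrite -(card_support_leaves e_sym).
- by rewrite invr_ge0 exprn_ge0 // ltW.
Qed.
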